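(* Let $q$ be a power of an odd prime. Then in ${\rm PG}(4,q)$ there exist a set $\mathcal L$ of $q^3+1$ pairwise skew lines and a set $\mathcal P$ of $q^3+1$ planes any two of which intersect in exactly one point, such that no line of $\mathcal L$ is contained in a plane of $\mathcal P$. *)

(* PG(4,q) = projective geometry of the vector space F^5
   ('rV[F]_5) over a finite field F with #|F| = q.
   Projective points/lines/planes = vector subspaces of dimension 1/2/3. *)
From HB Require Import structures.
From mathcomp Require Import all_boot all_order all_algebra all_field.
Set Implicit Arguments. Unset Strict Implicit. Unset Printing Implicit Defensive.
Import GRing.Theory.
Local Open Scope ring_scope.

Definition odd_prime_power (q : nat) : Prop :=
  exists p k : nat, [/\ prime p, odd p, (0 < k)%N & q = (p ^ k)%N].

Section PG4.
Variable F : finFieldType.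
Definition PG4_space := 'rV[F]_5.

Definition is_line (U : {vspace PG4_space}) : Prop := \dim U = 2%N.
Definition is_plane (U : {vspace PG4_space}) : Prop := \dim U = 3%N.

Definition skew_lines (U V : {vspace PG4_space}) : Prop := (U :&: V)%VS = 0%VS.

Definition meet_in_point (U V : {vspace PG4_space}) : Prop :=
  \dim (U :&: V) = 1%N.
End PG4.

(* Fix c in F outside the range of x |-> x^3 - x; it exists because this map
   identifies 1 and -1 when the characteristic is odd.  The binary cubic form
   x^3 - x y^2 - c y^3 then has no zero with y <> 0.
   The lines are the graphs {(k, k M(a))} of the 2x3 matrices
   M(a) = [[a1, a2, a3], [c a3, a1 + a3, a2]], together with <e3, e4>; the
   planes are the graphs {(y, y N(b))} of the 3x2 matrices N(t1, t2, s) with rows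
   (s, -t1), (c t2, 1 + t2 + s), (t1, t2), together with <e1, e4, e5>.
   Differences of these matrices depend linearly on the difference of the
   parameters, and for a nonzero difference the cross product of the rows of
   M(a) - M(a') (resp. of the columns of N(b) - N(b')) is nonzero, because its
   vanishing produces a zero of the cubic form.  Hence distinct graph lines are
   skew, and distinct graph planes meet in at most a point, so in exactly one
   point since two planes of PG(4,q) always meet.  A graph line inside a graph
   plane would, after elimination, give yet another zero of the cubic form. *)

From mathcomp Require Import all_boot all_order all_algebra all_field.
From mathcomp Require Import ring.
Set Implicit Arguments. Unset Strict Implicit. Unset Printing Implicit Defensive.
Import GRing.Theory.
Local Open Scope ring_scope.

Lemma sub_eq0_of_eq (R : comPzRingType) (x y z : R) : x = y -> z = x - y -> z = 0.
Proof. by move=> -> ->; rewrite subrr. Qed.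

Lemma lincomb_eq0 (R : comPzRingType) (a b x y z : R) :
  y = 0 -> z = 0 -> x = a * y + b * z -> x = 0.
Proof. by move=> -> -> ->; rewrite !mulr0 addr0. Qed.

Lemma cross_eq0_colinear (F : fieldType) (x1 x2 x3 z1 z2 z3 : F) :
    [|| z1 != 0, z2 != 0 | z3 != 0] ->
    x2 * z3 - x3 * z2 = 0 -> x3 * z1 - x1 * z3 = 0 -> x1 * z2 - x2 * z1 = 0 ->
  exists l, [/\ x1 = l * z1, x2 = l * z2 & x3 = l * z3].
Proof.
move=> /or3P[z1_neq0 | z2_neq0 | z3_neq0] /subr0_eq e1 /subr0_eq e2 /subr0_eq e3.
- exists (x1 / z1); split; rewrite ?divfK //; apply: (mulIf z1_neq0);
    by rewrite mulrAC divfK.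
- exists (x2 / z2); split; rewrite ?divfK //; apply: (mulIf z2_neq0);
    by rewrite mulrAC divfK.
- exists (x3 / z3); split; rewrite ?divfK //; apply: (mulIf z3_neq0);
    by rewrite mulrAC divfK.
Qed.

Section CrossProduct.
Variables (F : fieldType) (u1 u2 u3 v1 v2 v3 : F).
Hypothesis cross_neq0 :
  [|| u2 * v3 - u3 * v2 != 0, u3 * v1 - u1 * v3 != 0 | u1 * v2 - u2 * v1 != 0].

Lemma free_of_cross_neq0 k1 k2 :
    k1 * u1 + k2 * v1 = 0 -> k1 * u2 + k2 * v2 = 0 -> k1 * u3 + k2 * v3 = 0 ->
  k1 = 0 /\ k2 = 0.
Proof.
move=> e1 e2 e3.
have cross_ann k : k * (u2 * v3 - u3 * v2) = 0 -> k * (u3 * v1 - u1 * v3) = 0 ->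
    k * (u1 * v2 - u2 * v1) = 0 -> k = 0.
  move=> /eqP z1k /eqP z2k /eqP z3k; apply/eqP; apply: contraTT cross_neq0 => k_neq0.
  by move: z1k z2k z3k; rewrite !mulf_eq0 (negPf k_neq0) /= => -> -> ->.
split; apply: cross_ann.
- by apply: (lincomb_eq0 (a := v3) (b := - v2) e2 e3); ring.
- by apply: (lincomb_eq0 (a := v1) (b := - v3) e3 e1); ring.
- by apply: (lincomb_eq0 (a := v2) (b := - v1) e1 e2); ring.
- by apply: (lincomb_eq0 (a := - u3) (b := u2) e2 e3); ring.
- by apply: (lincomb_eq0 (a := - u1) (b := u3) e3 e1); ring.
- by apply: (lincomb_eq0 (a := - u2) (b := u1) e1 e2); ring.
Qed.

Lemma orthogonal_colinear_cross x1 x2 x3 :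
    x1 * u1 + x2 * u2 + x3 * u3 = 0 -> x1 * v1 + x2 * v2 + x3 * v3 = 0 ->
  exists l, [/\ x1 = l * (u2 * v3 - u3 * v2), x2 = l * (u3 * v1 - u1 * v3)
              & x3 = l * (u1 * v2 - u2 * v1)].
Proof.
move=> eu ev; apply: cross_eq0_colinear => //.
- by apply: (lincomb_eq0 (a := u1) (b := - v1) ev eu); ring.
- by apply: (lincomb_eq0 (a := u2) (b := - v2) ev eu); ring.
- by apply: (lincomb_eq0 (a := u3) (b := - v3) ev eu); ring.
Qed.

End CrossProduct.

Section Slopes.
Variables (F : fieldType) (c : F).
Hypothesis c_nonvalue : forall x : F, x ^+ 3 - x != c.

Lemma cubic_form_eq0 x y : x ^+ 3 - x * y ^+ 2 - c * y ^+ 3 = 0 -> y = 0.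
Proof.
apply: contra_eq => y_neq0.
have -> : x ^+ 3 - x * y ^+ 2 - c * y ^+ 3 = y ^+ 3 * ((x / y) ^+ 3 - x / y - c).
  by field.
by rewrite mulf_neq0 ?expf_neq0 // subr_eq0 c_nonvalue.
Qed.

Lemma line_slope_free (d1 d2 d3 k1 k2 : F) : [|| d1 != 0, d2 != 0 | d3 != 0] ->
    k1 * d1 + k2 * (c * d3) = 0 -> k1 * d2 + k2 * (d1 + d3) = 0 ->
    k1 * d3 + k2 * d2 = 0 ->
  k1 = 0 /\ k2 = 0.
Proof.
move=> d_neq0; apply: free_of_cross_neq0; apply: contraTT d_neq0.
rewrite !negb_or !negbK => /and3P[/eqP z1 /eqP z2 /eqP z3].
have d3_0 : d3 = 0.
  apply: (cubic_form_eq0 (x := d2)).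
  by apply: (lincomb_eq0 (a := d2) (b := - d3) z1 z2); ring.
move: z1; rewrite d3_0 mul0r subr0 => /eqP; rewrite mulf_eq0 orbb => /eqP d2_0.
move: z3; rewrite d2_0 d3_0 mul0r subr0 addr0 => /eqP; rewrite mulf_eq0 orbb => d1_0.
by rewrite d1_0 eqxx.
Qed.

Lemma plane_slope_kernel (d1 d2 d3 : F) : [|| d1 != 0, d2 != 0 | d3 != 0] ->
  exists z1 z2 z3, forall k1 k2 k3 : F,
    k1 * d3 + k2 * (c * d2) + k3 * d1 = 0 ->
    k1 * - d1 + k2 * (d2 + d3) + k3 * d2 = 0 ->
  exists l, [/\ k1 = l * z1, k2 = l * z2 & k3 = l * z3].
Proof.
move=> d_neq0.
suff cross_neq0 : [|| c * d2 * d2 - d1 * (d2 + d3) != 0, d1 * - d1 - d3 * d2 != 0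
                    | d3 * (d2 + d3) - c * d2 * - d1 != 0].
  by do 3 eexists; apply: (orthogonal_colinear_cross cross_neq0).
apply: contraTT d_neq0; rewrite !negb_or !negbK => /and3P[/eqP z1 /eqP z2 /eqP z3].
have d2_0 : d2 = 0.
  apply: (cubic_form_eq0 (x := - d1)).
  by apply: (lincomb_eq0 (a := - d2) (b := d1) z1 z2); ring.
move: z2; rewrite d2_0 mulr0 subr0 mulrN => /eqP; rewrite oppr_eq0 mulf_eq0 orbb => /eqP d1_0.
move: z3; rewrite d1_0 d2_0 oppr0 !mulr0 subr0 add0r => /eqP; rewrite mulf_eq0 orbb => d3_0.
by rewrite d3_0 eqxx.
Qed.

Lemma line_in_plane_absurd (a1 a2 a3 t1 t2 s : F) :
    a2 = s + a1 * t1 -> a3 = - t1 + a1 * t2 ->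
    a1 + a3 = c * t2 + c * a3 * t1 -> a2 = 1 + t2 + s + c * a3 * t2 ->
  False.
Proof.
move=> -> -> e3 e4.
pose P := t1 - c * t2 ^+ 2; pose Q := 1 + t2 - c * t1 * t2.
pose R := t1 + c * t2 - c * t1 ^+ 2; pose h := t1 ^+ 2 - t2 - t2 ^+ 2.
have aP : a1 * P = Q by apply/subr0_eq/(sub_eq0_of_eq e4); rewrite /P /Q; ring.
have aQ : a1 * Q = R by apply/subr0_eq/(sub_eq0_of_eq e3); rewrite /Q /R; ring.
have PR : P * R - Q ^+ 2 = 0 by rewrite -aQ mulrCA mulrA aP expr2 subrr.
have hQ : h * Q = P ^+ 2.
  apply: subr0_eq; have -> : h * Q - P ^+ 2 = t2 * (P * R - Q ^+ 2).
    by rewrite /h /P /Q /R; ring.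
  by rewrite PR mulr0.
have h_0 : h = 0.
  apply: (cubic_form_eq0 (x := - P)).
  have -> : (- P) ^+ 3 - (- P) * h ^+ 2 - c * h ^+ 3
            = (P * R - Q ^+ 2) * (h * t1 + P * t2).
    by rewrite /h /P /Q /R; ring.
  by rewrite PR mul0r.
have P_0 : P = 0 by apply/eqP; rewrite -sqrf_eq0 -hQ h_0 mul0r.
have Q_0 : Q = 0 by rewrite -aP P_0 mulr0.
have one_0 : (1 : F) = 0.
  apply: (cubic_form_eq0 (x := c * t2)).
  have -> : (c * t2) ^+ 3 - c * t2 * 1 ^+ 2 - c * 1 ^+ 3 = - c * Q - c ^+ 2 * t2 * P.
    by rewrite /P /Q; ring.
  by rewrite P_0 Q_0 !mulr0 subrr.
by move/eqP: one_0; rewrite oner_eq0.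
Qed.

End Slopes.

Lemma not_onto_of_not_injective (T : finType) (f : T -> T) x y :
  x != y -> f x = f y -> exists z, z \notin codom f.
Proof.
move=> neq_xy fxy; apply/existsP; apply: contraNT neq_xy; rewrite negb_exists.
move=> /forallP /= onto; have /image_injP f_inj : #|codom f| == #|T|.
  rewrite eqn_leq -[X in (_ <= X)%N](size_codom f) card_size.
  by apply: subset_leq_card; apply/subsetP => z _; rewrite -[_ \in _]negbK onto.
by apply/eqP; apply: f_inj.
Qed.

Lemma exists_cubic_nonvalue (F : finFieldType) :
  2%:R != 0 :> F -> exists c : F, forall x, x ^+ 3 - x != c.
Proof.
move=> two_neq0.
have [c c_nonvalue] : exists c, c \notin codom (fun x : F => x ^+ 3 - x).
  apply: (@not_onto_of_not_injective _ _ 1 (-1)); last by ring.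
  by rewrite -subr_eq0 opprK -mulr2n.
by exists c => x; apply: contraNneq c_nonvalue => <-; apply: codom_f.
Qed.

Lemma two_neq0_of_odd_prime_power (F : finFieldType) :
  odd_prime_power #|F| -> 2%:R != 0 :> F.
Proof.
case=> p [k [p_prime p_odd _ cardF]]; apply: contraL p_odd => /eqP two_0.
have char2 : 2%N \in [pchar F] by rewrite inE /= two_0 eqxx.
by move: char2; rewrite (pcharf_eq (card_finPcharP cardF p_prime)) inE => /eqP <-.
Qed.

Section SmallSpans.
Variables (K : fieldType) (vT : vectType K).
Implicit Types (u v w x z : vT) (U W : {vspace vT}).

Lemma memv_add2P u w x :
  reflect (exists k1 k2, x = k1 *: u + k2 *: w) (x \in <[u]> + <[w]>)%VS.
Proof.
apply: (iffP memv_addP) => [[_ /vlineP[k1 ->] [_ /vlineP[k2 ->] ->]] | [k1 [k2 ->]]].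
  by exists k1, k2.
by exists (k1 *: u); rewrite ?memvZ ?memv_line //; exists (k2 *: w); rewrite ?memvZ ?memv_line.
Qed.

Lemma memv_add3P u v w x :
  reflect (exists k1 k2 k3, x = k1 *: u + k2 *: v + k3 *: w)
          (x \in <[u]> + <[v]> + <[w]>)%VS.
Proof.
apply: (iffP memv_addP) => [[_ /memv_add2P[k1 [k2 ->]] [_ /vlineP[k3 ->] ->]] | ].
  by exists k1, k2, k3.
move=> [k1 [k2 [k3 ->]]].
exists (k1 *: u + k2 *: v); first by apply/memv_add2P; exists k1, k2.
by exists (k3 *: w); rewrite ?memvZ ?memv_line.
Qed.

Lemma capv_eq0 U W : (forall x, x \in U -> x \in W -> x = 0) -> (U :&: W = 0)%VS.
Proof.
move=> UW0; apply/eqP; rewrite -subv0; apply/subvP => x /memv_capP[xU xW].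
by rewrite (UW0 x xU xW) mem0v.
Qed.

Lemma dimv_add2 u w :
    (forall k1 k2, k1 *: u + k2 *: w = 0 -> k1 = 0 /\ k2 = 0) ->
  \dim (<[u]> + <[w]>) = 2%N.
Proof.
move=> free_uw; rewrite dimv_disjoint_sum ?dim_vline.
  have u_neq0 : u != 0.
    apply/eqP => u0; have := free_uw 1 0; rewrite u0 scaler0 scale0r addr0.
    by case=> // /eqP; rewrite oner_eq0.
  have w_neq0 : w != 0.
    apply/eqP => w0; have := free_uw 0 1; rewrite w0 scaler0 scale0r addr0.
    by case=> // _ /eqP; rewrite oner_eq0.
  by rewrite u_neq0 w_neq0.
apply: capv_eq0 => x /vlineP[k1 ->] /vlineP[k2 k1u].
have [|-> _] := free_uw k1 (- k2); last by rewrite scale0r.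
by rewrite k1u scaleNr addrN.
Qed.

Lemma dimv_add3 u v w :
    (forall k1 k2 k3, k1 *: u + k2 *: v + k3 *: w = 0 -> [/\ k1 = 0, k2 = 0 & k3 = 0]) ->
  \dim (<[u]> + <[v]> + <[w]>) = 3%N.
Proof.
move=> free_uvw; rewrite dimv_disjoint_sum ?dim_vline.
  rewrite dimv_add2; last first.
    by move=> k1 k2 k12; have [|-> ->] // := free_uvw k1 k2 0; rewrite scale0r addr0.
  have w_neq0 : w != 0.
    apply/eqP => w0; have := free_uvw 0 0 1; rewrite w0 scaler0 !scale0r !addr0.
    by case=> // _ _ /eqP; rewrite oner_eq0.
  by rewrite w_neq0.
apply: capv_eq0 => x /memv_add2P[k1 [k2 ->]] /vlineP[k3 k12].
have [|-> -> _] := free_uvw k1 k2 (- k3); last by rewrite !scale0r addr0.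
by rewrite k12 scaleNr addrN.
Qed.

Lemma dimv_cap_eq1 U W z : (dim vT < \dim U + \dim W)%N ->
  (U :&: W <= <[z]>)%VS -> \dim (U :&: W) = 1%N.
Proof.
move=> ltUW /dimvS; rewrite dim_vline => le_cap1.
have le_sum : (\dim (U + W) <= dim vT)%N by rewrite -dimvf dimvS ?subvf.
apply/eqP; rewrite eqn_leq (leq_trans le_cap1) ?leq_b1 //=.
by rewrite -(ltn_add2l (\dim (U + W))) addn0 dimv_sum_cap (leq_ltn_trans le_sum).
Qed.

End SmallSpans.

Lemma pairwise_cons_codom (T : eqType) (I : finType) (f : I -> T) (g : T)
    (R : T -> T -> Prop) :
    (forall U V, R U V -> R V U) -> {in g :: codom f, forall U, ~ R U U} ->
    (forall i j, i != j -> R (f i) (f j)) -> (forall i, R (f i) g) ->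
  uniq (g :: codom f) /\ {in g :: codom f &, forall U V, U != V -> R U V}.
Proof.
move=> R_sym R_irr R_f R_g.
have R_fam : {in g :: codom f &, forall U V, U != V -> R U V}.
  move=> U V; rewrite !inE => /predU1P[-> | /codomP[i ->]] /predU1P[-> | /codomP[j ->]].
  - by rewrite eqxx.
  - by move=> _; apply: R_sym.
  - by move=> _.
  - by move=> neq_fij; apply: R_f; apply: contraNneq neq_fij => ->.
split=> //=; apply/andP; split.
  apply/codomP => -[i gfi]; apply: (R_irr g); first exact: mem_head.
  by rewrite {1}gfi; apply: R_g.
rewrite codomE map_inj_uniq ?enum_uniq // => i j fij; apply/eqP/negPn/negP => /R_f.
by rewrite fij; apply: R_irr; rewrite inE codom_f orbT.
Qed.

Section Coordinates.
Variable R : pzRingType.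

Definition vec5 (x1 x2 x3 x4 x5 : R) : 'rV[R]_5 :=
  \row_(i < 5) nth 0 [:: x1; x2; x3; x4; x5] i.

Lemma vec5_inj x1 x2 x3 x4 x5 y1 y2 y3 y4 y5 :
  vec5 x1 x2 x3 x4 x5 = vec5 y1 y2 y3 y4 y5 ->
  [/\ x1 = y1, x2 = y2, x3 = y3, x4 = y4 & x5 = y5].
Proof.
move=> /rowP eq_xy.
move: (eq_xy ord0) (eq_xy (inord 1)) (eq_xy (inord 2)) (eq_xy (inord 3)) (eq_xy (inord 4)).
by rewrite !mxE !inordK.
Qed.

Lemma vec5D x1 x2 x3 x4 x5 y1 y2 y3 y4 y5 :
  vec5 x1 x2 x3 x4 x5 + vec5 y1 y2 y3 y4 y5
  = vec5 (x1 + y1) (x2 + y2) (x3 + y3) (x4 + y4) (x5 + y5).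
Proof. by apply/rowP => -[[|[|[|[|[|i]]]]] ?]; rewrite !mxE. Qed.

Lemma vec5Z k x1 x2 x3 x4 x5 :
  k *: vec5 x1 x2 x3 x4 x5 = vec5 (k * x1) (k * x2) (k * x3) (k * x4) (k * x5).
Proof. by apply/rowP => -[[|[|[|[|[|i]]]]] ?]; rewrite !mxE. Qed.

Lemma vec50 : vec5 0 0 0 0 0 = 0.
Proof. by apply/rowP => -[[|[|[|[|[|i]]]]] ?]; rewrite !mxE. Qed.

End Coordinates.

Lemma subr_triple_neq0 (R : zmodType) (a1 a2 a3 b1 b2 b3 : R) :
  (a1, a2, a3) != (b1, b2, b3) -> [|| a1 - b1 != 0, a2 - b2 != 0 | a3 - b3 != 0].
Proof. by rewrite !subr_eq0 -!negb_and; apply: contra => /and3P[/eqP-> /eqP-> /eqP->]. Qed.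

Section Construction.
Variables (F : finFieldType) (c : F).
Hypothesis c_nonvalue : forall x : F, x ^+ 3 - x != c.
Local Notation space := (PG4_space F).

Definition graph_line (a : F * F * F) : {vspace space} :=
  let: (a1, a2, a3) := a in
  (<[vec5 1 0 a1 a2 a3]> + <[vec5 0 1 (c * a3) (a1 + a3) a2]>)%VS.

Definition axis_line : {vspace space} := (<[vec5 0 0 1 0 0]> + <[vec5 0 0 0 1 0]>)%VS.

Definition graph_plane (b : F * F * F) : {vspace space} :=
  let: (t1, t2, s) := b in
  (<[vec5 1 0 0 s (- t1)]> + <[vec5 0 1 0 (c * t2) (1 + t2 + s)]>
   + <[vec5 0 0 1 t1 t2]>)%VS.

Definition axis_plane : {vspace space} :=
  (<[vec5 1 0 0 0 0]> + <[vec5 0 0 0 1 0]> + <[vec5 0 0 0 0 1]>)%VS.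

Definition line_family := axis_line :: codom graph_line.
Definition plane_family := axis_plane :: codom graph_plane.

Lemma graph_lineP a1 a2 a3 x : x \in graph_line (a1, a2, a3) ->
  exists k1 k2, x = vec5 k1 k2 (k1 * a1 + k2 * (c * a3)) (k1 * a2 + k2 * (a1 + a3))
                          (k1 * a3 + k2 * a2).
Proof.
move=> /memv_add2P[k1 [k2 ->]]; exists k1, k2.
by rewrite !vec5Z vec5D; congr vec5; ring.
Qed.

Lemma axis_lineP x : x \in axis_line -> exists k1 k2, x = vec5 0 0 k1 k2 0.
Proof.
move=> /memv_add2P[k1 [k2 ->]]; exists k1, k2.
by rewrite !vec5Z vec5D; congr vec5; ring.
Qed.

Lemma graph_planeP t1 t2 s x : x \in graph_plane (t1, t2, s) ->
  exists k1 k2 k3, x = vec5 k1 k2 k3 (k1 * s + k2 * (c * t2) + k3 * t1)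
                                      (k1 * - t1 + k2 * (1 + t2 + s) + k3 * t2).
Proof.
move=> /memv_add3P[k1 [k2 [k3 ->]]]; exists k1, k2, k3.
by rewrite !vec5Z !vec5D; congr vec5; ring.
Qed.

Lemma axis_planeP x : x \in axis_plane -> exists k1 k2 k3, x = vec5 k1 0 0 k2 k3.
Proof.
move=> /memv_add3P[k1 [k2 [k3 ->]]]; exists k1, k2, k3.
by rewrite !vec5Z !vec5D; congr vec5; ring.
Qed.

Lemma dim_graph_line a : \dim (graph_line a) = 2%N.
Proof.
case: a => [[a1 a2] a3]; apply: dimv_add2 => k1 k2.
by rewrite !vec5Z vec5D -vec50 => /vec5_inj[]; rewrite !(mulr0, mulr1, addr0, add0r).
Qed.

Lemma dim_axis_line : \dim axis_line = 2%N.
Proof.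
apply: dimv_add2 => k1 k2.
by rewrite !vec5Z vec5D -vec50 => /vec5_inj[]; rewrite !(mulr0, mulr1, addr0, add0r).
Qed.

Lemma dim_graph_plane b : \dim (graph_plane b) = 3%N.
Proof.
case: b => [[t1 t2] s]; apply: dimv_add3 => k1 k2 k3.
by rewrite !vec5Z !vec5D -vec50 => /vec5_inj[]; rewrite !(mulr0, mulr1, addr0, add0r).
Qed.

Lemma dim_axis_plane : \dim axis_plane = 3%N.
Proof.
apply: dimv_add3 => k1 k2 k3.
by rewrite !vec5Z !vec5D -vec50 => /vec5_inj[]; rewrite !(mulr0, mulr1, addr0, add0r).
Qed.

Lemma graph_line_skew a b : a != b -> (graph_line a :&: graph_line b = 0)%VS.
Proof.
case: a b => [[a1 a2] a3] [[b1 b2] b3] /subr_triple_neq0 d_neq0.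
apply: capv_eq0 => x /graph_lineP[k1 [k2 ->]].
move=> /graph_lineP[j1 [j2 /vec5_inj[<- <- e3 e4 e5]]].
have [-> ->] : k1 = 0 /\ k2 = 0.
  apply: (line_slope_free c_nonvalue d_neq0).
  - by apply: (sub_eq0_of_eq e3); ring.
  - by apply: (sub_eq0_of_eq e4); ring.
  - by apply: (sub_eq0_of_eq e5); ring.
by rewrite !(mul0r, addr0) vec50.
Qed.

Lemma graph_line_axis_skew a : (graph_line a :&: axis_line = 0)%VS.
Proof.
case: a => [[a1 a2] a3]; apply: capv_eq0 => x /graph_lineP[k1 [k2 ->]].
by case/axis_lineP => j1 [j2 /vec5_inj[-> -> _ _ _]]; rewrite !(mul0r, addr0) vec50.
Qed.

Lemma graph_plane_meet b b' : b != b' -> \dim (graph_plane b :&: graph_plane b') = 1%N.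
Proof.
case: b b' => [[t1 t2] s] [[t1' t2'] s'] /subr_triple_neq0.
case/(plane_slope_kernel c_nonvalue) => z1 [z2 [z3 kernel]].
apply: (dimv_cap_eq1 (z := vec5 z1 z2 z3 (z1 * s + z2 * (c * t2) + z3 * t1)
                                  (z1 * - t1 + z2 * (1 + t2 + s) + z3 * t2))).
  by rewrite !dim_graph_plane dim_matrix.
apply/subvP => x /memv_capP[/graph_planeP[k1 [k2 [k3 ->]]]].
move=> /graph_planeP[j1 [j2 [j3 /vec5_inj[<- <- <- e4 e5]]]].
have [l [-> -> ->]] : exists l, [/\ k1 = l * z1, k2 = l * z2 & k3 = l * z3].
  by apply: kernel; [apply: (sub_eq0_of_eq e4) | apply: (sub_eq0_of_eq e5)]; ring.
by apply/vlineP; exists l; rewrite vec5Z; congr vec5; ring.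
Qed.

Lemma graph_plane_axis_meet b : \dim (graph_plane b :&: axis_plane) = 1%N.
Proof.
case: b => [[t1 t2] s]; apply: (dimv_cap_eq1 (z := vec5 1 0 0 s (- t1))).
  by rewrite dim_graph_plane dim_axis_plane dim_matrix.
apply/subvP => x /memv_capP[/graph_planeP[k1 [k2 [k3 ->]]]].
case/axis_planeP => j1 [j2 [j3 /vec5_inj[_ -> -> _ _]]].
by apply/vlineP; exists k1; rewrite vec5Z; congr vec5; ring.
Qed.

Lemma graph_line_not_sub_graph_plane a b : ~~ (graph_line a <= graph_plane b)%VS.
Proof.
case: a b => [[a1 a2] a3] [[t1 t2] s]; apply/negP => /subvP sub_ab.
have /graph_planeP[k1 [k2 [k3 /vec5_inj[<- <- <- e4 e5]]]] :=
  sub_ab _ (subvP (addvSl _ _) _ (memv_line _)).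
have /graph_planeP[j1 [j2 [j3 /vec5_inj[<- <- <- f4 f5]]]] :=
  sub_ab _ (subvP (addvSr _ _) _ (memv_line _)).
move: e4 e5 f4 f5; rewrite !(mul0r, mul1r, addr0, add0r).
exact: line_in_plane_absurd.
Qed.

Lemma graph_line_not_sub_axis_plane a : ~~ (graph_line a <= axis_plane)%VS.
Proof.
case: a => [[a1 a2] a3]; apply/negP => /subvP sub_a.
have /axis_planeP[j1 [j2 [j3 /vec5_inj[_ /eqP]]]] :=
  sub_a _ (subvP (addvSr _ _) _ (memv_line _)).
by rewrite oner_eq0.
Qed.

Lemma axis_line_not_sub_graph_plane b : ~~ (axis_line <= graph_plane b)%VS.
Proof.
case: b => [[t1 t2] s]; apply/negP => /subvP sub_b.
have /graph_planeP[k1 [k2 [k3 /vec5_inj[<- <- <- /eqP]]]] :=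
  sub_b _ (subvP (addvSr _ _) _ (memv_line _)).
by rewrite !(mul0r, addr0) oner_eq0.
Qed.

Lemma axis_line_not_sub_axis_plane : ~~ (axis_line <= axis_plane)%VS.
Proof.
apply/negP => /subvP sub_axis.
have /axis_planeP[j1 [j2 [j3 /vec5_inj[_ _ /eqP]]]] :=
  sub_axis _ (subvP (addvSl _ _) _ (memv_line _)).
by rewrite oner_eq0.
Qed.

Lemma size_cons_codom_triple (T : Type) (f : F * F * F -> T) (g : T) :
  size (g :: codom f) = (#|F| ^ 3).+1.
Proof. by rewrite /= size_codom !card_prod !expnS expn0 muln1 mulnA. Qed.

Lemma line_family_spec :
  uniq line_family /\ size line_family = (#|F| ^ 3).+1 /\
  (forall U, U \in line_family -> is_line U) /\
  (forall U V, U \in line_family -> V \in line_family -> U != V -> skew_lines U V).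
Proof.
have lines U : U \in line_family -> is_line U.
  rewrite inE => /predU1P[-> | /codomP[a ->]].
    exact: dim_axis_line.
  exact: dim_graph_line.
have skew_sym (U V : {vspace space}) : skew_lines U V -> skew_lines V U.
  by rewrite /skew_lines capvC.
have skew_irr : {in line_family, forall U, ~ skew_lines U U}.
  move=> U /lines; rewrite /is_line /skew_lines capvv => dimU U0.
  by move: dimU; rewrite U0 dimv0.
have [uniqL skewL] :=
  pairwise_cons_codom skew_sym skew_irr graph_line_skew graph_line_axis_skew.
split=> //; split; first exact: size_cons_codom_triple.
by split.
Qed.

Lemma plane_family_spec :
  uniq plane_family /\ size plane_family = (#|F| ^ 3).+1 /\
  (forall A, A \in plane_family -> is_plane A) /\
  (forall A B, A \in plane_family -> B \in plane_family -> A != B -> meet_in_point A B).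
Proof.
have planes A : A \in plane_family -> is_plane A.
  rewrite inE => /predU1P[-> | /codomP[b ->]].
    exact: dim_axis_plane.
  exact: dim_graph_plane.
have meet_sym (A B : {vspace space}) : meet_in_point A B -> meet_in_point B A.
  by rewrite /meet_in_point capvC.
have meet_irr : {in plane_family, forall A, ~ meet_in_point A A}.
  by move=> A /planes; rewrite /is_plane /meet_in_point capvv => ->.
have [uniqP meetP] :=
  pairwise_cons_codom meet_sym meet_irr graph_plane_meet graph_plane_axis_meet.
split=> //; split; first exact: size_cons_codom_triple.
by split.
Qed.

Lemma line_family_not_sub_plane_family U A :
  U \in line_family -> A \in plane_family -> ~~ (U <= A)%VS.
Proof.
rewrite !inE => /predU1P[-> | /codomP[a ->]] /predU1P[-> | /codomP[b ->]].
- exact: axis_line_not_sub_axis_plane.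
- exact: axis_line_not_sub_graph_plane.
- exact: graph_line_not_sub_axis_plane.
- exact: graph_line_not_sub_graph_plane.
Qed.

End Construction.

Unset Implicit Arguments.

Theorem theorem2p5 (q : nat) (F : finFieldType) :
  odd_prime_power q -> #|F| = q ->
  exists (L P : seq {vspace PG4_space F}),
    (* L : q^3+1 distinct lines, pairwise skew *)
    (uniq L /\ size L = (q ^ 3).+1 /\
     (forall U, U \in L -> is_line U) /\
     (forall U V, U \in L -> V \in L -> U != V -> skew_lines U V)) /\
    (* P : q^3+1 distinct planes, any two meeting in exactly one point *)
    (uniq P /\ size P = (q ^ 3).+1 /\
     (forall A, A \in P -> is_plane A) /\
     (forall A B, A \in P -> B \in P -> A != B -> meet_in_point A B)) /\
    (* no line of L lies in a plane of P *)
    (forall U A, U \in L -> A \in P -> ~~ (U <= A)%VS).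
Proof.
move=> odd_q card_F; subst q.
have [c c_nonvalue] := exists_cubic_nonvalue (two_neq0_of_odd_prime_power odd_q).
exists (line_family c), (plane_family c); split; [|split].
- exact: line_family_spec.
- exact: plane_family_spec.
- exact: line_family_not_sub_plane_family.
Qed.
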